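(* Let $S \in \mathbb{Z}^{m\times m}$ be a nonsingular Smith form, $T \in \mathbb{Z}^{m\times m}$ a nonsingular matrix in Hermite form, $A \in \mathbb{Z}^{a\times m}$ and $F\in\mathbb{Z}^{f\times m}$ (with $a,f\ge 0$), such that every row of $S$ and of $A$ lies in $\mathcal{L}(T)$. Consider, with column blocks of sizes $f,m,a,m$, $$M = \begin{bmatrix} I_f & F & 0 & 0 \\ 0 & T & 0 & I_m \\ 0 & A & I_a & 0 \\ 0 & S & 0 & 0\end{bmatrix}.$$ Then: (1) The Hermite form of $M$ has the shape $\begin{bmatrix} I_f & G & 0 & Q \\ 0 & T & 0 & X \\ 0 & 0 & I_a & C \\ 0 & 0 & 0 & K\end{bmatrix}$ for some integer blocks $G\in\mathbb{Z}^{f\times m}$, $Q\in\mathbb{Z}^{f\times m}$, $X\in\mathbb{Z}^{m\times m}$, $C \in\mathbb{Z}^{a\times m}$, $K\in\mathbb{Z}^{m\times m}$. (2) $\begin{bmatrix} I_a & C\\ 0 & K\end{bmatrix}$ is the Hermite form of the integer matrix $\begin{bmatrix} I_a & -AT^{-1} \\ 0 & -ST^{-1}\end{bmatrix}$. (3) There is a unimodular matrix of the form $\bar U = \begin{bmatrix} I_f & Q & 0 & Y_2 \\ 0 & I_m & 0 & 0 \\ 0 & C & I_a & Y_3 \\ 0 & K & 0 & Y_4\end{bmatrix}$ (for some integer blocks $Y_2,Y_3,Y_4$, with $G,Q,C,K$ as in (1)) such that $$\bar U M = \begin{bmatrix} I_f & G & 0 & Q \\ 0 & T & 0 & I_m \\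 0 & 0 & I_a & C \\ 0 & 0 & 0 & K\end{bmatrix}.$$
   Context: For an integer matrix $A$, $\mathcal{L}(A)$ denotes the lattice of all $\mathbb{Z}$-linear combinations of the rows of $A$. A nonsingular square integer matrix is in Hermite form if it is upper triangular with positive diagonal entries $h_j$ and each entry above the diagonal in column $j$ lies in $[0,h_j)$; every nonsingular integer matrix $B$ has a unique Hermite form $WB$ with $W$ unimodular. A Smith form is a diagonal matrix $\mathrm{diag}(s_1,\dots,s_m)$ with nonnegative integer entries and $s_i \mid s_{i+1}$; it is nonsingular if all $s_i>0$. *)

From HB Require Import structures.
From mathcomp Require Import all_boot all_order all_algebra.
Set Implicit Arguments. Unset Strict Implicit. Unset Printing Implicit Defensive.
Import Order.TTheory GRing.Theory Num.Theory.
Local Open Scope ring_scope.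

Definition row4 (R : Type) (r p1 p2 p3 p4 : nat)
  (B1 : 'M[R]_(r, p1)) (B2 : 'M[R]_(r, p2)) (B3 : 'M[R]_(r, p3)) (B4 : 'M[R]_(r, p4))
  : 'M[R]_(r, p1 + p2 + p3 + p4) := row_mx (row_mx (row_mx B1 B2) B3) B4.

Definition col4 (R : Type) (c p1 p2 p3 p4 : nat)
  (R1 : 'M[R]_(p1, c)) (R2 : 'M[R]_(p2, c)) (R3 : 'M[R]_(p3, c)) (R4 : 'M[R]_(p4, c))
  : 'M[R]_(p1 + p2 + p3 + p4, c) := col_mx (col_mx (col_mx R1 R2) R3) R4.

Definition in_lattice (k m : nat) (B : 'M[int]_(k, m)) (v : 'rV[int]_m) : Prop :=
  exists x : 'rV[int]_k, v = x *m B.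

Definition is_hermite (n : nat) (H : 'M[int]_n) : Prop :=
  [/\ forall i j : 'I_n, (j < i)%N -> H i j = 0,
      forall j : 'I_n, 0 < H j j &
      forall i j : 'I_n, (i < j)%N -> 0 <= H i j < H j j].

Definition unimodular (n : nat) (W : 'M[int]_n) : Prop := W \in unitmx.

Definition hermite_form_of (n : nat) (B H : 'M[int]_n) : Prop :=
  is_hermite H /\ exists W : 'M[int]_n, unimodular W /\ H = W *m B.

Definition is_smith (n : nat) (S : 'M[int]_n) : Prop :=
  [/\ forall i j : 'I_n, i != j -> S i j = 0,
      forall i : 'I_n, 0 <= S i i &
      forall i j : 'I_n, (i.+1 = j)%N -> (S i i %| S j j)%Z].

Definition is_nonsingular_smith (n : nat) (S : 'M[int]_n) : Prop :=
  is_smith S /\ forall i : 'I_n, 0 < S i i.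

Definition ratmx (p q : nat) (B : 'M[int]_(p, q)) : 'M[rat]_(p, q) :=
  map_mx (fun x : int => x%:~R) B.

(** Write S = P_S T and A = P_A T.  The Hermite form of [[I, -P_A], [0, -P_S]]
    is [[I, C], [0, K]] = [[I, Y3], [0, Y4]] [[I, -P_A], [0, -P_S]]; the
    integer identities K T + Y4 S = 0 and C T + A + Y3 S = 0 say that the
    transformation Ubar built from these blocks clears the A and S blocks of M.
    Reducing F modulo T and the remaining off-diagonal blocks modulo K (which
    only modifies the unimodular transformation) yields the Hermite form. *)

From HB Require Import structures.
From mathcomp Require Import all_boot all_order all_algebra.
Import Order.TTheory GRing.Theory Num.Theory.
Local Open Scope ring_scope.

Set Implicit Arguments. Unset Strict Implicit.

Section Block4.
Variables (R : pzRingType) (p1 p2 p3 p4 : nat).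

Lemma mul_col4 r s (R1 : 'M[R]_(p1, r)) (R2 : 'M[R]_(p2, r)) (R3 : 'M[R]_(p3, r))
    (R4 : 'M[R]_(p4, r)) (B : 'M[R]_(r, s)) :
  col4 R1 R2 R3 R4 *m B = col4 (R1 *m B) (R2 *m B) (R3 *m B) (R4 *m B).
Proof. by rewrite /col4 !mul_col_mx. Qed.

Lemma mul_row4_col4 k c (A1 : 'M[R]_(k, p1)) (A2 : 'M[R]_(k, p2)) (A3 : 'M[R]_(k, p3))
    (A4 : 'M[R]_(k, p4)) (R1 : 'M[R]_(p1, c)) (R2 : 'M[R]_(p2, c))
    (R3 : 'M[R]_(p3, c)) (R4 : 'M[R]_(p4, c)) :
  row4 A1 A2 A3 A4 *m col4 R1 R2 R3 R4
  = A1 *m R1 + A2 *m R2 + A3 *m R3 + A4 *m R4.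
Proof. by rewrite /row4 /col4 !mul_row_col. Qed.

Lemma mul_mx_row4 k r (B : 'M[R]_(k, r)) (B1 : 'M[R]_(r, p1)) (B2 : 'M[R]_(r, p2))
    (B3 : 'M[R]_(r, p3)) (B4 : 'M[R]_(r, p4)) :
  B *m row4 B1 B2 B3 B4 = row4 (B *m B1) (B *m B2) (B *m B3) (B *m B4).
Proof. by rewrite /row4 !mul_mx_row. Qed.

Lemma add_row4 r (A1 B1 : 'M[R]_(r, p1)) (A2 B2 : 'M[R]_(r, p2))
    (A3 B3 : 'M[R]_(r, p3)) (A4 B4 : 'M[R]_(r, p4)) :
  row4 A1 A2 A3 A4 + row4 B1 B2 B3 B4 = row4 (A1 + B1) (A2 + B2) (A3 + B3) (A4 + B4).
Proof. by rewrite /row4 !add_row_mx. Qed.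

Lemma col4_block q1 q2 q3 q4
  (B11 : 'M[R]_(p1, q1)) (B12 : 'M[R]_(p1, q2)) (B13 : 'M[R]_(p1, q3)) (B14 : 'M[R]_(p1, q4))
  (B21 : 'M[R]_(p2, q1)) (B22 : 'M[R]_(p2, q2)) (B23 : 'M[R]_(p2, q3)) (B24 : 'M[R]_(p2, q4))
  (B31 : 'M[R]_(p3, q1)) (B32 : 'M[R]_(p3, q2)) (B33 : 'M[R]_(p3, q3)) (B34 : 'M[R]_(p3, q4))
  (B41 : 'M[R]_(p4, q1)) (B42 : 'M[R]_(p4, q2)) (B43 : 'M[R]_(p4, q3)) (B44 : 'M[R]_(p4, q4)) :
  col4 (row4 B11 B12 B13 B14) (row4 B21 B22 B23 B24)
       (row4 B31 B32 B33 B34) (row4 B41 B42 B43 B44)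
  = block_mx (block_mx (block_mx B11 B12 B21 B22) (col_mx B13 B23) (row_mx B31 B32) B33)
             (col_mx (col_mx B14 B24) B34) (row_mx (row_mx B41 B42) B43) B44.
Proof.
rewrite /col4 /row4.
rewrite -[col_mx (row_mx (row_mx (row_mx B11 B12) B13) B14) _]/(block_mx _ _ _ _).
rewrite block_mxEh -[col_mx (row_mx (row_mx B11 B12) B13) _]/(block_mx _ _ _ _).
rewrite block_mxEh.
by rewrite -[col_mx (row_mx (row_mx _ _) (col_mx B14 B24)) _]/(block_mx _ _ _ _) block_mxEh.
Qed.

End Block4.

Definition reduced_mod (n k : nat) (H : 'M[int]_n) (B : 'M[int]_(k, n)) : Prop :=
  forall i j, 0 <= B i j < H j j.

Lemma reduced_mod0 n k (H : 'M[int]_n) :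
  (forall j, 0 < H j j) -> reduced_mod H (0 : 'M_(k, n)).
Proof. by move=> hd i j; rewrite mxE lexx hd. Qed.

Lemma reduced_mod_col n k1 k2 (H : 'M[int]_n) (B1 : 'M_(k1, n)) (B2 : 'M_(k2, n)) :
  reduced_mod H B1 -> reduced_mod H B2 -> reduced_mod H (col_mx B1 B2).
Proof.
by move=> h1 h2 i j; case: (split_ordP i) => i' ->; rewrite ?col_mxEu ?col_mxEd.
Qed.

Lemma is_hermite1 n : is_hermite (1%:M : 'M[int]_n).
Proof.
split=> [i j lt_ji|j|i j lt_ij]; rewrite !mxE ?eqxx // -val_eqE.
  by rewrite gtn_eqF.
by rewrite ltn_eqF.
Qed.

Lemma is_hermite_mx11 (c : 'M[int]_1) : 0 < c 0 0 -> is_hermite c.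
Proof. by move=> h; split => [i j|j|i j]; rewrite !ord1. Qed.

Lemma is_hermite_block p q (H1 : 'M[int]_p) (B : 'M[int]_(p, q)) (H2 : 'M[int]_q) :
  is_hermite H1 -> is_hermite H2 -> reduced_mod H2 B ->
  is_hermite (block_mx H1 B 0 H2).
Proof.
have lshift_lt_rshift (i : 'I_p) (j : 'I_q) : (lshift q i < rshift p j)%N.
  by rewrite /= (leq_trans (ltn_ord i)) // leq_addr.
move=> [l1 d1 u1] [l2 d2 u2] hB; split.
- move=> i j; case: (split_ordP i) => i' ->; case: (split_ordP j) => j' ->.
  + by rewrite block_mxEul; apply: l1.
  + by rewrite ltnNge ltnW ?lshift_lt_rshift.
  + by rewrite block_mxEdl mxE.
  + by rewrite block_mxEdr /= ltn_add2l; apply: l2.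
- by move=> j; case: (split_ordP j) => j' ->; rewrite ?block_mxEul ?block_mxEdr.
- move=> i j; case: (split_ordP i) => i' ->; case: (split_ordP j) => j' ->.
  + by rewrite !block_mxEul; apply: u1.
  + by rewrite block_mxEur block_mxEdr.
  + by rewrite ltnNge ltnW ?lshift_lt_rshift.
  + by rewrite !block_mxEdr /= ltn_add2l; apply: u2.
Qed.

(* Division with remainder, column by column from the left: the quotients of
   the first column are fixed first, the rest is reduced recursively. *)
Lemma exists_reduced_mod n (H : 'M[int]_n) :
  (forall i j : 'I_n, (j < i)%N -> H i j = 0) -> (forall j, 0 < H j j) ->
  forall k (V : 'M[int]_(k, n)), exists Z, reduced_mod H (V - Z *m H).
Proof.
elim: n H => [|n IH] H hl hd k V; first by exists 0 => i [].
move: H V hl hd; change n.+1 with (1 + n)%N => H V hl hd.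
set h := ulsubmx H; set s := ursubmx H; set H' := drsubmx H.
have eH : H = block_mx h s 0 H'.
  by rewrite -[H]submxK; congr block_mx; apply/matrixP => i j; rewrite !mxE hl // ord1.
set v := lsubmx V; set V' := rsubmx V.
pose q : 'M[int]_(k, 1) := \matrix_(i, j) (v i j %/ h ord0 ord0)%Z.
have lH' : forall i j : 'I_n, (j < i)%N -> H' i j = 0.
  by move=> i j lt_ji; rewrite /H' !mxE hl.
have dH' : forall j, 0 < H' j j by move=> j; rewrite /H' !mxE.
have [Z' hZ'] := IH H' lH' dH' k (V' - q *m s).
exists (row_mx q Z') => i j.
rewrite eH -[V]hsubmxK mul_row_block mulmx0 addr0 opp_row_mx add_row_mx.
case: (split_ordP j) => j' ->.
  have subz_divz x d : x - (x %/ d)%Z * d = (x %% d)%Z.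
    by rewrite {1}(divz_eq x d) addrC addKr.
  rewrite row_mxEl block_mxEul !mxE big_ord1 !mxE !ord1 subz_divz.
  by rewrite modz_ge0 ?gt_eqF //= ltz_pmod.
by rewrite row_mxEr block_mxEdr; have := hZ' i j'; rewrite !mxE opprD addrA.
Qed.

Lemma exists_unitmx_clear_col n (v : 'cV[int]_(1 + n)) :
  exists2 L : 'M[int]_(1 + n), L \in unitmx & exists c : 'M_1, L *m v = col_mx c 0.
Proof.
have [L uL [R uR [d _ ev]]] := int_Smith_normal_form v.
exists (invmx L); first by rewrite unitmx_inv.
set D := \matrix_(i, j) _ in ev.
exists (usubmx (D *m R)); rewrite ev -!mulmxA mulKmx //.
have DR_d : dsubmx (D *m R) = 0.
  by apply/matrixP => i j; rewrite !mxE big_ord1 !mxE /= mulr0n mul0r.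
by rewrite -{1}[D *m R]vsubmxK DR_d.
Qed.

(* Fix the sign of the pivot, then reduce the first row modulo the Hermite
   form of the trailing block. *)
Lemma exists_hermite_ublock1 n (c : 'M[int]_1) (r : 'rV[int]_n) (B : 'M[int]_n)
    (W : 'M[int]_n) :
  c 0 0 != 0 -> W \in unitmx -> is_hermite (W *m B) ->
  exists2 U : 'M[int]_(1 + n), U \in unitmx & is_hermite (U *m block_mx c r 0 B).
Proof.
move=> c0 uW hWB; have [lWB dWB _] := hWB.
pose e : int := if 0 < c 0 0 then 1 else -1.
have ec_gt0 : 0 < e * c 0 0.
  rewrite /e; case: ifP => [|/negbT]; rewrite ?mul1r // mulN1r oppr_gt0 -leNgt.
  by rewrite lt_neqAle c0.
have ue : e \is a GRing.unit by rewrite /e; case: ifP; rewrite ?unitr1 ?unitrN1.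
have [Z hZ] := exists_reduced_mod lWB dWB (e%:M *m r).
exists (block_mx 1%:M (- Z) 0 1%:M *m block_mx e%:M 0 0 W).
  by rewrite unitmx_mul !unitmxE !det_ublock !det1 !mul1r det_scalar1 unitr1 unitrM ue -unitmxE.
rewrite -mulmxA !mulmx_block !(mulmx0, mul0mx, mul1mx, addr0, add0r) mulNmx.
apply: is_hermite_block => //; apply: is_hermite_mx11.
by rewrite !mxE big_ord1 !mxE /= mulr1n.
Qed.

Lemma exists_hermite_form n (B : 'M[int]_n) : \det B != 0 ->
  exists2 W : 'M[int]_n, W \in unitmx & is_hermite (W *m B).
Proof.
elim: n B => [|n IH] B detB.
  by exists 1%:M; [exact: unitmx1 | split => -[]].
move: B detB; change n.+1 with (1 + n)%N => B detB.
have [L uL [c Lv]] := exists_unitmx_clear_col (lsubmx B).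
have eLB : L *m B = block_mx c (ursubmx (L *m B)) 0 (drsubmx (L *m B)).
  have LB_l : lsubmx (L *m B) = col_mx c 0 by rewrite -mulmx_lsub.
  rewrite -{1}[L *m B]submxK; congr block_mx; apply/matrixP => i j.
  - by move/matrixP/(_ (lshift n i) j): LB_l; rewrite col_mxEu !mxE.
  - by move/matrixP/(_ (rshift 1 i) j): LB_l; rewrite col_mxEd !mxE.
have : \det (L *m B) != 0.
  by rewrite det_mulmx mulf_neq0 //; apply: contraTneq uL => detL0; rewrite unitmxE detL0 unitr0.
rewrite eLB det_ublock det_mx11 mulf_eq0 negb_or => /andP[c0 /IH[W uW hW]].
have [U uU hU] := exists_hermite_ublock1 (ursubmx (L *m B)) c0 uW hW.
by exists (U *m L); rewrite ?unitmx_mul ?uU // -mulmxA eLB.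
Qed.

Section ThreeBlockTransform.
Variables (f m a : nat).

Definition M_mx (R : pzRingType) (F : 'M[R]_(f, m)) (T : 'M[R]_m) (A : 'M[R]_(a, m))
    (S : 'M[R]_m) : 'M[R]_(f + m + a + m) :=
  col4 (row4 1%:M F 0 0) (row4 0 T 0 1%:M) (row4 0 A 1%:M 0) (row4 0 S 0 0).

Definition Ubar_mx (R : pzRingType) (Q Y2 : 'M[R]_(f, m)) (C Y3 : 'M[R]_(a, m))
    (K Y4 : 'M[R]_m) : 'M[R]_(f + m + a + m) :=
  col4 (row4 1%:M Q 0 Y2) (row4 0 1%:M 0 0) (row4 0 C 1%:M Y3) (row4 0 K 0 Y4).

Definition hermite_shape_mx (R : pzRingType) (G Q : 'M[R]_(f, m)) (T X : 'M[R]_m)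
    (C : 'M[R]_(a, m)) (K : 'M[R]_m) : 'M[R]_(f + m + a + m) :=
  col4 (row4 1%:M G 0 Q) (row4 0 T 0 X) (row4 0 0 1%:M C) (row4 0 0 0 K).

Lemma unitmx_Ubar (R : comUnitRingType) (Q Y2 : 'M[R]_(f, m)) (C Y3 : 'M[R]_(a, m))
    (K Y4 : 'M[R]_m) :
  (Ubar_mx Q Y2 C Y3 K Y4 \in unitmx) = (Y4 \in unitmx).
Proof.
have -> : Ubar_mx Q Y2 C Y3 K Y4 = Ubar_mx 0 0 C 0 K Y4 *m Ubar_mx Q Y2 0 Y3 0 1%:M.
  rewrite /Ubar_mx mul_col4 !mul_row4_col4 !mul_mx_row4 !add_row4.
  by rewrite !(mul1mx, mulmx1, mul0mx, mulmx0, addr0, add0r).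
rewrite unitmx_mul !unitmxE /Ubar_mx !col4_block !row_mx0 !col_mx0.
by rewrite det_lblock det_ublock !det_lblock !det_ublock !det1 !mul1r unitr1 andbT.
Qed.

Lemma Ubar_mulmx_M (R : pzRingType) (F Q Y2 : 'M[R]_(f, m)) (A C Y3 : 'M[R]_(a, m))
    (T S K Y4 : 'M[R]_m) :
  C *m T + A + Y3 *m S = 0 -> K *m T + Y4 *m S = 0 ->
  Ubar_mx Q Y2 C Y3 K Y4 *m M_mx F T A S
  = hermite_shape_mx (F + Q *m T + Y2 *m S) Q T 1%:M C K.
Proof.
move=> clearA clearS.
rewrite /Ubar_mx /M_mx mul_col4 !mul_row4_col4 !mul_mx_row4 !add_row4.
by rewrite !(mul1mx, mulmx1, mul0mx, mulmx0, addr0, add0r) clearA clearS.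
Qed.

Lemma Ubar_mulmx_M_lattice (R : pzRingType) (F Z0 Z1 : 'M[R]_(f, m))
    (PA C Y3 : 'M[R]_(a, m)) (T PS K Y4 : 'M[R]_m) :
  K = Y4 *m - PS -> C = - PA + Y3 *m - PS ->
  Ubar_mx (- Z0 - Z1 *m K) (- (Z1 *m Y4)) C Y3 K Y4 *m M_mx F T (PA *m T) (PS *m T)
  = hermite_shape_mx (F - Z0 *m T) (- Z0 - Z1 *m K) T 1%:M C K.
Proof.
move=> defK defC; have KT : K *m T = - (Y4 *m (PS *m T)).
  by rewrite defK mulmxN mulNmx mulmxA.
rewrite Ubar_mulmx_M.
- by rewrite mulmxDl !mulNmx -mulmxA KT mulmxN opprK mulmxA addrA addrK.
- by rewrite defC mulmxDl mulNmx mulmxN mulNmx mulmxA addrAC addrNK addNr.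
- by rewrite KT addNr.
Qed.

Lemma hermite_shape_addX (R : comUnitRingType) (G Q : 'M[R]_(f, m)) (T X Z K : 'M[R]_m)
    (C : 'M[R]_(a, m)) :
  exists2 V, V \in unitmx &
    V *m hermite_shape_mx G Q T X C K = hermite_shape_mx G Q T (X + Z *m K) C K.
Proof.
exists (col4 (row4 1%:M 0 0 0) (row4 0 1%:M 0 Z) (row4 0 0 1%:M 0) (row4 0 0 0 1%:M)).
  by rewrite unitmxE !col4_block !row_mx0 !col_mx0 !det_ublock !det1 !mul1r unitr1.
rewrite /hermite_shape_mx mul_col4 !mul_row4_col4 !mul_mx_row4 !add_row4.
by rewrite !(mul1mx, mulmx1, mul0mx, mulmx0, addr0, add0r).
Qed.

Lemma is_hermite_shape (G Q : 'M[int]_(f, m)) (T X K : 'M[int]_m) (C : 'M[int]_(a, m)) :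
  is_hermite T -> is_hermite K -> reduced_mod T G ->
  reduced_mod K Q -> reduced_mod K X -> reduced_mod K C ->
  is_hermite (hermite_shape_mx G Q T X C K).
Proof.
move=> hT hK hG hQ hX hC.
rewrite /hermite_shape_mx col4_block !row_mx0 !col_mx0.
apply: is_hermite_block => //; last by do ?apply: reduced_mod_col.
apply: is_hermite_block; rewrite ?col_mx0.
- exact: is_hermite_block (is_hermite1 _) hT hG.
- exact: is_hermite1.
- by apply: reduced_mod0 => j; rewrite mxE eqxx.
Qed.

End ThreeBlockTransform.

Lemma exists_hermite_form_ublock1 a m (B : 'M[int]_(a, m)) (D : 'M[int]_m) :
  \det D != 0 -> exists Y3 Y4,
    [/\ Y4 \in unitmx, is_hermite (Y4 *m D) & reduced_mod (Y4 *m D) (B + Y3 *m D)].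
Proof.
move=> /exists_hermite_form[Y4 uY4 hK]; have [lK dK _] := hK.
have [Z hZ] := exists_reduced_mod lK dK B.
by exists (- (Z *m Y4)), Y4; rewrite mulNmx -mulmxA.
Qed.

Lemma hermite_form_of_ublock1 a m (B Y3 : 'M[int]_(a, m)) (D Y4 : 'M[int]_m) :
  Y4 \in unitmx -> is_hermite (Y4 *m D) -> reduced_mod (Y4 *m D) (B + Y3 *m D) ->
  hermite_form_of (block_mx 1%:M B 0 D) (block_mx 1%:M (B + Y3 *m D) 0 (Y4 *m D)).
Proof.
move=> uY4 hK hC; split; first exact: is_hermite_block (is_hermite1 _) hK hC.
exists (block_mx 1%:M Y3 0 Y4); split.
  by rewrite /unimodular unitmxE det_ublock det1 mul1r -unitmxE.
by rewrite mulmx_block !(mulmx0, mul0mx, mul1mx, addr0, add0r).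
Qed.

Lemma rows_in_lattice_mulmx k m (T : 'M[int]_m) (B : 'M[int]_(k, m)) :
  (forall i, in_lattice T (row i B)) -> exists P, B = P *m T.
Proof.
move=> /fin_all_exists[x hx].
exists (\matrix_i x i); apply/row_matrixP => i.
by rewrite row_mul rowK hx.
Qed.

Lemma det_nonsingular_smith_neq0 m (S : 'M[int]_m) :
  is_nonsingular_smith S -> \det S != 0.
Proof.
move=> [[offS _ _] posS].
rewrite det_trig; last by apply/is_trig_mxP => i j lt_ij; apply: offS; rewrite neq_ltn lt_ij.
by rewrite gt_eqF // prodr_gt0.
Qed.

Lemma ratmx_mulmxK k m (P : 'M[int]_(k, m)) (T : 'M[int]_m) :
  \det T != 0 -> ratmx (P *m T) *m invmx (ratmx T) = ratmx P.
Proof.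
move=> detT; have uT : ratmx T \in unitmx.
  by rewrite unitmxE /ratmx det_map_mx unitfE intr_eq0.
by rewrite /ratmx map_mxM -mulmxA mulmxV // mulmx1.
Qed.
Theorem mainTheorem13 (m a f : nat)
  (S T : 'M[int]_m) (A : 'M[int]_(a, m)) (F : 'M[int]_(f, m)) :
  is_nonsingular_smith S ->
  is_hermite T ->
  (forall i : 'I_m, in_lattice T (row i S)) ->
  (forall i : 'I_a, in_lattice T (row i A)) ->
  let M : 'M[int]_(f + m + a + m) :=
    col4 (row4 (1%:M : 'M_f) F (0 : 'M_(f, a)) (0 : 'M_(f, m)))
         (row4 (0 : 'M_(m, f)) T (0 : 'M_(m, a)) (1%:M : 'M_m))
         (row4 (0 : 'M_(a, f)) A (1%:M : 'M_a) (0 : 'M_(a, m)))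
         (row4 (0 : 'M_(m, f)) S (0 : 'M_(m, a)) (0 : 'M_m)) in
  exists (G Q : 'M[int]_(f, m)) (X : 'M[int]_m) (C : 'M[int]_(a, m)) (K : 'M[int]_m)
         (Y2 : 'M[int]_(f, m)) (Y3 : 'M[int]_(a, m)) (Y4 : 'M[int]_m),
    [/\
     (* (1) *)
     hermite_form_of M
       (col4 (row4 (1%:M : 'M_f) G (0 : 'M_(f, a)) Q)
             (row4 (0 : 'M_(m, f)) T (0 : 'M_(m, a)) X)
             (row4 (0 : 'M_(a, f)) (0 : 'M_(a, m)) (1%:M : 'M_a) C)
             (row4 (0 : 'M_(m, f)) (0 : 'M_m) (0 : 'M_(m, a)) K)),
     (* (2) *)
     exists N : 'M[int]_(a + m),
       ratmx N = block_mx (1%:M : 'M[rat]_a) (- (ratmx A *m invmx (ratmx T)))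
                          (0 : 'M[rat]_(m, a)) (- (ratmx S *m invmx (ratmx T)))
       /\ hermite_form_of N (block_mx (1%:M : 'M_a) C (0 : 'M_(m, a)) K) &
     (* (3) *)
     let Ubar : 'M[int]_(f + m + a + m) :=
       col4 (row4 (1%:M : 'M_f) Q (0 : 'M_(f, a)) Y2)
            (row4 (0 : 'M_(m, f)) (1%:M : 'M_m) (0 : 'M_(m, a)) (0 : 'M_m))
            (row4 (0 : 'M_(a, f)) C (1%:M : 'M_a) Y3)
            (row4 (0 : 'M_(m, f)) K (0 : 'M_(m, a)) Y4) in
     unimodular Ubar /\
     Ubar *m M =
       col4 (row4 (1%:M : 'M_f) G (0 : 'M_(f, a)) Q)
            (row4 (0 : 'M_(m, f)) T (0 : 'M_(m, a)) (1%:M : 'M_m))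
            (row4 (0 : 'M_(a, f)) (0 : 'M_(a, m)) (1%:M : 'M_a) C)
            (row4 (0 : 'M_(m, f)) (0 : 'M_m) (0 : 'M_(m, a)) K)].
Proof.
move=> smithS hT /rows_in_lattice_mulmx[PS defS] /rows_in_lattice_mulmx[PA ->] M.
subst S; have -> : M = M_mx F T (PA *m T) (PS *m T) by [].
have /andP[detPS detT] : (\det PS != 0) && (\det T != 0).
  by rewrite -negb_or -mulf_eq0 -det_mulmx det_nonsingular_smith_neq0.
have detNPS : \det (- PS) != 0.
  by rewrite -scaleN1r detZ mulf_neq0 ?expf_neq0 ?oppr_eq0 ?oner_eq0.
have [Y3 [Y4 [uY4 hK hC]]] := exists_hermite_form_ublock1 (- PA) detNPS.
set K := Y4 *m - PS in hK hC; set C := - PA + Y3 *m - PS in hC.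
have [[lT dT _] [lK dK _]] := (hT, hK).
have [Z0 hG] := exists_reduced_mod lT dT F.
have [Z1 hQ] := exists_reduced_mod lK dK (- Z0).
have [Z2 hX] := exists_reduced_mod lK dK 1%:M.
have hUM := Ubar_mulmx_M_lattice F Z0 Z1 T (erefl K) (erefl C).
exists (F - Z0 *m T), (- Z0 - Z1 *m K), (1%:M - Z2 *m K), C, K, (- (Z1 *m Y4)), Y3, Y4.
split.
- have [V uV hV] := hermite_shape_addX (F - Z0 *m T) (- Z0 - Z1 *m K) T 1%:M (- Z2) K C.
  split; first exact: is_hermite_shape.
  exists (V *m Ubar_mx (- Z0 - Z1 *m K) (- (Z1 *m Y4)) C Y3 K Y4).
  by rewrite /unimodular unitmx_mul uV unitmx_Ubar -mulmxA hUM hV mulNmx.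
- exists (block_mx 1%:M (- PA) 0 (- PS)); split; last exact: hermite_form_of_ublock1.
  by rewrite /ratmx map_block_mx map_mx1 !map_mxN map_mx0 -!/(ratmx _) !ratmx_mulmxK.
- by rewrite /unimodular unitmx_Ubar.
Qed.
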